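(* Assume the setting below and suppose $\tau=0$. Then (with probability one) the iterates $x_k$ converge to a limit $\bar x$ with $\bar x^{(1)}=0$.
   Context: Let $n\ge2$, $a\ge\sqrt{n-1}$, $f(x)=a|x^{(1)}|+\sum_{i=2}^n x^{(i)}$ on $\mathbb{R}^n$ ($x^{(i)}$ the $i$-th coordinate), $0<c_1<c_2<1$, and $\tau=c_1+\frac{(n-1)(c_1-1)}{a^2}$. The initial point $x_0$ is drawn from the normal distribution on $\mathbb{R}^n$ (independently of $a$), and $x_{k+1}=x_k+t_kd_k$, $d_k=-\nabla f(x_k)$, where $t_k$ is returned by the following Armijo–Wolfe bracketing line search: set $\alpha=0$, $\beta=+\infty$, $t=1$; repeat: if $A(t)$ fails set $\beta\leftarrow t$; else if $W(t)$ fails set $\alpha\leftarrow t$; else stop and return $t$; then if $\beta<+\infty$ set $t\leftarrow(\alpha+\beta)/2$, otherwise $t\leftarrow2\alpha$. Here $A(t)$: $f(x_k+td_k)\le f(x_k)+c_1t\nabla f(x_k)^Td_k$, and $W(t)$: $f$ is differentiable at $x_k+td_k$ and $\nabla f(x_k+td_k)^Td_k\ge c_2\nabla f(x_k)^Td_k$. All statements are understood to hold with probability one. *)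

From HB Require Import structures.
From mathcomp Require Import all_boot all_order all_algebra.
From mathcomp Require Import all_classical all_reals all_analysis.
Set Implicit Arguments. Unset Strict Implicit. Unset Printing Implicit Defensive.
Import Order.TTheory GRing.Theory Num.Theory.
Import numFieldNormedType.Exports.
Local Open Scope classical_set_scope.
Local Open Scope ring_scope.

Section Defs.
Variable R : realType.

(* Points of R^n are row vectors 'rV[R]_n; coordinate x^(i+1) is  x 0 i
   (so the paper's first coordinate x^(1) is the entry of index 0). *)

Definition fobj (n : nat) (a : R) (x : 'rV[R]_n) : R :=
  a * `| \sum_(i < n | val i == 0%N) x 0 i | + \sum_(i < n | val i != 0%N) x 0 i.

Definition dotv (n : nat) (u v : 'rV[R]_n) : R := \sum_(i < n) u 0 i * v 0 i.

Definition grad (n : nat) (f : 'rV[R]_n -> R) (x : 'rV[R]_n) : 'rV[R]_n :=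
  \row_(i < n) ('D_(delta_mx 0 i) f x).

Definition armijo (n : nat) (f : 'rV[R]_n -> R) (c1 : R) (x d : 'rV[R]_n) (t : R) : Prop :=
  f (x + t *: d) <= f x + c1 * t * dotv (grad f x) d.

Definition wolfe (n : nat) (f : 'rV[R]_n -> R) (c2 : R) (x d : 'rV[R]_n) (t : R) : Prop :=
  differentiable f (x + t *: d) /\
  dotv (grad f (x + t *: d)) d >= c2 * dotv (grad f x) d.

(* State of the bracketing line search: (alpha, beta, t), beta = None
   standing for beta = +infinity. *)
Definition ls_step (n : nat) (f : 'rV[R]_n -> R) (c1 c2 : R) (x d : 'rV[R]_n)
    (st : R * option R * R) : R * option R * R :=
  let: (al, be, t) := st in
  let: (al', be') :=
    if ~~ `[< armijo f c1 x d t >] then (al, Some t)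
    else if ~~ `[< wolfe f c2 x d t >] then (t, be)
    else (al, be) in
  (al', be', match be' with Some b => (al' + b) / 2 | None => 2 * al' end).

(* k-th state of the line search; the k-th trial step is its last component. *)
Definition ls_state (n : nat) (f : 'rV[R]_n -> R) (c1 c2 : R) (x d : 'rV[R]_n)
    (k : nat) : R * option R * R :=
  iter k (ls_step f c1 c2 x d) (0, None, 1).

Definition ls_returns (n : nat) (f : 'rV[R]_n -> R) (c1 c2 : R) (x d : 'rV[R]_n)
    (t : R) : Prop :=
  exists k : nat,
    (ls_state f c1 c2 x d k).2 = t /\ armijo f c1 x d t /\ wolfe f c2 x d t /\
    forall j : nat, (j < k)%N ->
      ~ (armijo f c1 x d (ls_state f c1 c2 x d j).2 /\
         wolfe f c2 x d (ls_state f c1 c2 x d j).2).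

Definition gd_iterates (n : nat) (f : 'rV[R]_n -> R) (c1 c2 : R)
    (x0 : 'rV[R]_n) (xs : nat -> 'rV[R]_n) : Prop :=
  xs 0%N = x0 /\
  (forall k, differentiable f (xs k)) /\
  forall k, exists t : R,
    ls_returns f c1 c2 (xs k) (- grad f (xs k)) t /\
    xs k.+1 = xs k + t *: (- grad f (xs k)).

(* Lebesgue-null subsets of R^n: for every eps > 0 they can be covered by
   countably many closed boxes [lo_k, hi_k] of total volume at most eps.
   (Null sets of any nondegenerate normal distribution on R^n are exactly
   these sets.) *)
Definition lebesgue_null (n : nat) (S : set 'rV[R]_n) : Prop :=
  forall eps : R, 0 < eps ->
  exists lo hi : nat -> 'rV[R]_n,
    (forall k (i : 'I_n), lo k 0 i <= hi k 0 i) /\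
    S `<=` \bigcup_k [set y | forall i : 'I_n, lo k 0 i <= y 0 i <= hi k 0 i] /\
    forall N : nat, \sum_(k < N) \prod_(i < n) (hi k 0 i - lo k 0 i) <= eps.

(* "P holds with probability one for x0 drawn from the normal distribution". *)
Definition almost_surely (n : nat) (P : 'rV[R]_n -> Prop) : Prop :=
  lebesgue_null [set x0 | ~ P x0].

End Defs.

From HB Require Import structures.
From mathcomp Require Import all_boot all_order all_algebra.
From mathcomp Require Import all_classical all_reals all_analysis.
From mathcomp Require Import ring lra.
Set Implicit Arguments.
Unset Strict Implicit.
Unset Printing Implicit Defensive.

Import Order.TTheory GRing.Theory Num.Theory.
Import numFieldNormedType.Exports.
Local Open Scope classical_set_scope.
Local Open Scope ring_scope.

(* Off the hyperplane x^(1) = 0 the gradient of f is (a sgn x^(1), 1, ..., 1),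
   and tau = 0 makes the Armijo condition read t a <= 2 |x^(1)| while the Wolfe
   condition reads t a > |x^(1)|.  With u = |x^(1)| / a, the bracketing search,
   whose trial steps are powers of 2, returns the unique power of 2 in (u, 2u)
   as long as u is not dyadic; the new value of u is t - u, so this holds along
   the whole run once x0^(1) / a is not dyadic, which fails only on countably
   many hyperplanes.  Consecutive steps are powers of 2 with
   t_{k+1} < 2 (t_k - u_k) < t_k, so they at least halve: they are summable,
   the coordinates x^(i), i >= 2, which decrease by t_k, converge, and
   |x_k^(1)| < a t_k tends to 0. *)

Lemma sgr_eq_of_dist_lt {R : realFieldType} (c r : R) :
  `|c - r| < `|c| -> Num.sg r = Num.sg c.
Proof.
have [c0|c0|->] := ltrgtP c 0; last by rewrite normr0 ltNge normr_ge0.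
- rewrite (ltr0_norm c0) ltr_norml => /andP[? ?].
  by rewrite !ltr0_sg //; lra.
- rewrite (gtr0_norm c0) ltr_norml => /andP[? ?].
  by rewrite !gtr0_sg //; lra.
Qed.

Lemma differentiable_norm_neq0 {R : realType} (c : R) :
  c != 0 -> differentiable (fun r : R => `|r|) c.
Proof.
move=> c0; have dsc : differentiable ( *:%R (Num.sg c) : R -> R) c by [].
apply/derivable1_diffP/(near_eq_derivable _ (diff_derivable dsc)).
have /cvgrPdist_lt/(_ `|c|) := @cvg_id _ (nbhs c); rewrite normr_gt0 => /(_ c0).
by apply: filterS => r /sgr_eq_of_dist_lt <- /=; rewrite normrEsg.
Qed.

Section DotProduct.
Context {R : realType} (n : nat).
Implicit Types u v w y : 'rV[R]_n.

Lemma dotvN u v : dotv u (- v) = - dotv u v.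
Proof. by rewrite /dotv -sumrN; apply: eq_bigr => i _; rewrite !mxE mulrN. Qed.

Lemma dotv_delta w i : dotv w (delta_mx 0 i) = w 0 i.
Proof.
rewrite /dotv (bigD1 i) //= big1 => [|j /negbTE ji].
  by rewrite mxE !eqxx mulr1 addr0.
by rewrite mxE ji andbF mulr0.
Qed.

Lemma derive_dotv w y v : 'D_v (dotv w) y = dotv w v.
Proof.
apply: lim_near_cst; first exact: norm_hausdorff.
near=> h; have h0 : h != 0 by near: h; exact: nbhs_dnbhs_neq.
rewrite /= /dotv -sumrB scaler_sumr; apply: eq_bigr => i _.
by rewrite !mxE /GRing.scale /=; field.
Unshelve. all: by end_near. Qed.

End DotProduct.

Section Gradient.
Context {R : realType} (n : nat) (a : R).
Implicit Types y z : 'rV[R]_n.+1.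

Lemma fobjE z : fobj a z = a * `|z 0 ord0| + \sum_(i < n) z 0 (lift ord0 i).
Proof.
rewrite /fobj big_mkcond big_ord_recl /= big1 ?addr0 //.
by rewrite big_mkcond big_ord_recl /= add0r.
Qed.

Definition fobj_slope (s : R) : 'rV[R]_n.+1 :=
  \row_i (if val i == 0%N then a * s else 1).

Lemma fobj_near_linear y : y 0 ord0 != 0 ->
  \forall z \near y, fobj a z = dotv (fobj_slope (Num.sg (y 0 ord0))) z.
Proof.
move=> y0; have := @coord_continuous R 1 n.+1 0 ord0 y.
move=> /cvgrPdist_lt/(_ `|y 0 ord0|); rewrite normr_gt0 => /(_ y0).
apply: filterS => z /sgr_eq_of_dist_lt <-.
rewrite fobjE /dotv big_ord_recl !mxE /= -mulrA -normrEsg.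
by congr (_ + _); apply: eq_bigr => i _; rewrite !mxE mul1r.
Qed.

Lemma grad_fobj y : y 0 ord0 != 0 ->
  grad (fobj a) y = fobj_slope (Num.sg (y 0 ord0)).
Proof.
move=> y0; apply/rowP => i.
by rewrite mxE (near_eq_derive _ (fobj_near_linear y0)) derive_dotv dotv_delta.
Qed.

Lemma differentiable_fobj y : y 0 ord0 != 0 -> differentiable (fobj a) y.
Proof.
move=> y0; have -> : fobj a = (fun z : 'rV[R]_n.+1 => `|z 0 ord0| *: a) +
    \sum_(i < n) (fun z : 'rV[R]_n.+1 => z 0 (lift ord0 i)).
  by apply/funext => z; rewrite fobjE fct_sumE /= mulrC.
apply: differentiableD; last first.
  by apply: differentiable_sum => i; exact: differentiable_coord.
apply/differentiableZl/differentiable_comp; first exact: differentiable_coord.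
exact: differentiable_norm_neq0.
Qed.

End Gradient.

Section SteepestDescentStep.
Context {R : realType} (n : nat) (a c1 c2 : R).
Hypotheses (a_gt0 : 0 < a) (n_le_a2 : n%:R <= a ^+ 2).
Hypotheses (c2_gt0 : 0 < c2) (c2_lt1 : c2 < 1).
Hypothesis tau0 : c1 * (a ^+ 2 + n%:R) = n%:R.

Lemma dotv_fobj_slope s s' :
  dotv (fobj_slope n a s) (fobj_slope n a s') = a ^+ 2 * s * s' + n%:R.
Proof.
rewrite /dotv big_ord_recl !mxE /=.
under eq_bigr do rewrite !mxE /= mulr1.
by rewrite sumr_const card_ord; congr (_ + _); ring.
Qed.

Variable x : 'rV[R]_n.+1.
Hypothesis x0 : x 0 ord0 != 0.
Let d := - grad (fobj a) x.
Let p := `|x 0 ord0|.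

Lemma steepest_step0 t : (x + t *: d) 0 ord0 = Num.sg (x 0 ord0) * (p - t * a).
Proof.
rewrite /d grad_fobj // !mxE /= /GRing.scale /= /p.
by rewrite {1}(numEsg (x 0 ord0)); ring.
Qed.

Lemma steepest_stepS t i : (x + t *: d) 0 (lift ord0 i) = x 0 (lift ord0 i) - t.
Proof. by rewrite /d grad_fobj // !mxE /= /GRing.scale /= mulrN mulr1. Qed.

Lemma dotv_grad_steepest : dotv (grad (fobj a) x) d = - (a ^+ 2 + n%:R).
Proof.
by rewrite /d grad_fobj // dotvN dotv_fobj_slope -mulrA -expr2 sqr_sg x0 mulr1.
Qed.

Lemma armijo_steepestE t : 0 <= t -> armijo (fobj a) c1 x d t <-> t <= 2 * (p / a).
Proof.
move=> t_ge0; rewrite /armijo dotv_grad_steepest mulrN -mulrA mulrCA tau0.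
rewrite !fobjE steepest_step0 normrM normr_sg x0 mul1r -/p.
under eq_bigr do rewrite steepest_stepS.
rewrite sumrB sumr_const card_ord mulr_natr mulrA ler_pdivlMr //.
set S := \sum_i _; set m := t *+ n.
have -> : (a * `|p - t * a| + (S - m) <= a * p + S - m) = (a * `|p - t * a| <= a * p).
  by apply/idP/idP; lra.
have ta_ge0 : 0 <= t * a by rewrite mulr_ge0 // ltW.
rewrite ler_pM2l // ler_norml.
by split => [/andP[? ?]|?]; last (apply/andP; split); lra.
Qed.

Lemma wolfe_steepestE t : 0 <= t -> t != p / a ->
  wolfe (fobj a) c2 x d t <-> p / a < t.
Proof.
move=> t_ge0 t_neq; rewrite ltr_pdivrMr //.
have ta_neq : p - t * a != 0.
  apply: contra t_neq; rewrite subr_eq0 => /eqP ->.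
  by rewrite mulfK // gt_eqF.
have y0 : (x + t *: d) 0 ord0 != 0 by rewrite steepest_step0 mulf_neq0 ?sgr_eq0.
rewrite /wolfe.
have -> : dotv (grad (fobj a) (x + t *: d)) d = - (a ^+ 2 * Num.sg (p - t * a) + n%:R).
  rewrite grad_fobj // steepest_step0 /d grad_fobj // dotvN dotv_fobj_slope.
  have ss : Num.sg (x 0 ord0) * Num.sg (x 0 ord0) = 1 by rewrite -expr2 sqr_sg x0.
  by rewrite sgrM sgr_id mulrAC -mulrA (mulrA (Num.sg _)) ss mul1r.
rewrite dotv_grad_steepest.
have a2n_gt0 : 0 < a ^+ 2 + n%:R by rewrite ltr_wpDr // exprn_gt0.
have [ta_lt|ta_gt|ta_p] := ltrgtP (t * a) p; last by rewrite ta_p subrr eqxx in ta_neq.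
- rewrite gtr0_sg ?subr_gt0 // mulr1; split => [[_]|]; last lra.
  have : 0 < (1 - c2) * (a ^+ 2 + n%:R) by rewrite mulr_gt0 ?subr_gt0.
  lra.
- rewrite ltr0_sg ?subr_lt0 // mulrN1; split => // _; split.
    by rewrite -/d; exact: differentiable_fobj.
  have : 0 <= c2 * (a ^+ 2 + n%:R) by rewrite mulr_ge0 ?ltW.
  (* Past the kink the slope along d is a^2 - n: this is where a >= sqrt (n - 1)
     is needed. *)
  by have := n_le_a2; rewrite mulrN; lra.
Qed.

End SteepestDescentStep.

Section Dyadic.
Context {R : realType}.
Implicit Types r t : R.

Definition pow2 t := exists m : int, t = 2 ^ m.

Definition dyadic r := exists (z : int) (q : nat), r = z%:~R / 2 ^+ q.

Lemma exists_expn2_gt r : exists k : nat, r < 2 ^+ k.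
Proof.
have [r_le0|r_gt0] := lerP r 0; first by exists 0%N; rewrite expr0; lra.
exists (Num.Def.archi_bound r); apply: (lt_le_trans (archi_boundP (ltW r_gt0))).
by rewrite -natrX ler_nat ltnW // ltn_expl.
Qed.

Lemma pow2Xn (k : nat) : pow2 (2 ^+ k).
Proof. by exists k. Qed.

Lemma pow2VXn (k : nat) : pow2 (2 ^+ k)^-1.
Proof. by exists (- k%:Z); rewrite -invr_expz. Qed.

Lemma pow2_gt0 t : pow2 t -> 0 < t.
Proof. by move=> [m ->]; rewrite exprz_gt0. Qed.

Lemma pow2_le_half t t' : pow2 t -> pow2 t' -> t' < t -> t' <= t / 2.
Proof.
move=> [m ->] [m' ->]; rewrite ltr_eXz2l ?ltr1n // => m'_lt.
have -> : (2 : R) ^ m / 2 = 2 ^ (m - 1) by rewrite expfzDr // -invr_expz expr1z.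
by rewrite ler_eXz2l ?ltr1n // lerBrDr lezD1.
Qed.

Lemma dyadic0 : dyadic 0.
Proof. by exists 0, 0%N; rewrite mul0r. Qed.

Lemma dyadicB r r' : dyadic r -> dyadic r' -> dyadic (r - r').
Proof.
move=> [z [q ->]] [z' [q' ->]].
exists (z * 2 ^+ q' - z' * 2 ^+ q), (q + q')%N.
rewrite rmorphB !rmorphM !rmorphXn /= exprD.
by field; rewrite !expf_neq0.
Qed.

Lemma dyadic_half r : dyadic r -> dyadic (r / 2).
Proof.
by move=> [z [q ->]]; exists z, q.+1; rewrite exprS; field; rewrite expf_neq0.
Qed.

Lemma pow2_dyadic t : pow2 t -> dyadic t.
Proof.
move=> [[k|k] ->]; first by exists (2 ^+ k), 0%N; rewrite rmorphXn expr0 divr1.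
by exists 1, k.+1; rewrite mul1r.
Qed.

End Dyadic.

Section BracketingLineSearch.
Context {R : realType} (N : nat) (f : 'rV[R]_N -> R) (c1 c2 : R) (x d : 'rV[R]_N).

Local Notation A := (armijo f c1 x d).
Local Notation W := (wolfe f c2 x d).
Local Notation state := (ls_state f c1 c2 x d).
Local Notation returns := (ls_returns f c1 c2 x d).

Lemma ls_returns_unique t t' : returns t -> returns t' -> t = t'.
Proof.
move=> [k [<- [Ak [Wk before_k]]]] [k' [<- [Ak' [Wk' before_k']]]].
by case: (ltngtP k k') => [/before_k'|/before_k|-> //]; case.
Qed.

Lemma ls_state_armijo_fail k al be t : state k = (al, be, t) -> ~ A t ->
  state k.+1 = (al, Some t, (al + t) / 2).
Proof.
move=> st_k At.
by rewrite /ls_state iterS -/(ls_state _ _ _ _ _ k) st_k /ls_step (asboolF At).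
Qed.

Lemma ls_state_wolfe_fail k al t : state k = (al, None, t) -> A t -> ~ W t ->
  state k.+1 = (t, None, 2 * t).
Proof.
move=> st_k At Wt; rewrite /ls_state iterS -/(ls_state _ _ _ _ _ k) st_k.
by rewrite /ls_step (asboolT At) (asboolF Wt).
Qed.

Variable u : R.
Hypothesis u_gt0 : 0 < u.
Hypothesis armijoE : forall t, 0 < t -> A t <-> t <= 2 * u.
Hypothesis wolfeE : forall t, 0 < t -> t != u -> W t <-> u < t.
Hypotheses (u_npow2 : ~ pow2 u) (u2_npow2 : ~ pow2 (2 * u)).

Let pow2_neq t : pow2 t -> t != u.
Proof. by move=> t2; apply/eqP => tu; apply: u_npow2; rewrite -tu. Qed.

Lemma ls_returns_halving : u < 1 -> exists2 t, pow2 t & returns t.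
Proof.
move=> u_lt1.
have Vpow_gt0 k : 0 < ((2 : R) ^+ k)^-1 by rewrite invr_gt0 exprn_gt0.
have Vpow_neq k : ((2 : R) ^+ k)^-1 != u by apply/pow2_neq/pow2VXn.
have [|j j_le j_min] := @ex_minnP (fun j => ((2 : R) ^+ j)^-1 <= 2 * u).
  have [j hj] := exists_expn2_gt (2 * u)^-1; exists j.
  by rewrite invf_ple ?posrE ?exprn_gt0 ?mulr_gt0 // ltW.
have too_long k : (k < j)%N -> ~ A ((2 ^+ k)^-1).
  by move=> kj; rewrite armijoE // => /j_min; rewrite leqNgt kj.
have state_le k : (k <= j)%N -> exists be, state k = (0, be, (2 ^+ k)^-1).
  elim: k => [|k IH] kj; first by exists None; rewrite /= expr0 invr1.
  have [be st_k] := IH (ltnW kj).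
  exists (Some ((2 ^+ k)^-1)); rewrite (ls_state_armijo_fail st_k); last exact: too_long.
  by rewrite add0r exprS invfM mulrC.
have trial k : (k <= j)%N -> (state k).2 = (2 ^+ k)^-1.
  by move=> /state_le[be ->].
exists ((2 ^+ j)^-1); first exact: pow2VXn.
exists j; rewrite trial //; split=> //; split; first by rewrite armijoE.
split; last by move=> k kj; rewrite trial ?(ltnW kj) // => -[/(too_long k kj)].
rewrite wolfeE //.
case: j j_le j_min {state_le trial too_long} => [|j] _ j_min.
  by rewrite expr0 invr1.
have : ~~ (((2 : R) ^+ j)^-1 <= 2 * u) by apply/negP => /j_min; rewrite ltnn.
by rewrite -ltNge exprS invfM; lra.
Qed.

Lemma ls_returns_doubling : 1 < u -> exists2 t, pow2 t & returns t.
Proof.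
move=> u_gt1.
have pow_gt0 k : 0 < (2 : R) ^+ k by rewrite exprn_gt0.
have pow_neq k : (2 : R) ^+ k != u by apply/pow2_neq/pow2Xn.
have [|j j_gt j_min] := @ex_minnP (fun j => u < (2 : R) ^+ j).
  exact: exists_expn2_gt.
have too_short k : (k < j)%N -> (2 : R) ^+ k < u.
  move=> kj; rewrite lt_neqAle pow_neq leNgt.
  by apply/negP => /j_min; rewrite leqNgt kj.
have state_le k : (k <= j)%N -> exists al, state k = (al, None, 2 ^+ k).
  elim: k => [|k IH] kj; first by exists 0; rewrite /= expr0.
  have [al st_k] := IH (ltnW kj); have := too_short k kj.
  exists (2 ^+ k); rewrite (ls_state_wolfe_fail st_k) ?exprS //.
    by rewrite armijoE //; lra.
  by rewrite wolfeE //; lra.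
have trial k : (k <= j)%N -> (state k).2 = 2 ^+ k.
  by move=> /state_le[al ->].
exists (2 ^+ j); first exact: pow2Xn.
exists j; rewrite trial //; split=> //; split.
  case: j j_gt j_min {state_le trial too_short} => [|j] j_gt j_min.
    by rewrite expr0 in j_gt; lra.
  have : ~~ (u < (2 : R) ^+ j) by apply/negP => /j_min; rewrite ltnn.
  by rewrite armijoE // -leNgt exprS; lra.
split; first by rewrite wolfeE.
move=> k kj; rewrite trial ?(ltnW kj) // => -[_].
by rewrite wolfeE //; have := too_short k kj; lra.
Qed.

Lemma ls_returns_exists : exists2 t, pow2 t & returns t.
Proof.
have [|u_gt1|u1] := ltrgtP u 1; [exact: ls_returns_halving|exact: ls_returns_doubling|].
by case: u_npow2; exists 0; rewrite u1.
Qed.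

Lemma ls_returns_pow2 t : returns t -> pow2 t /\ u < t < 2 * u.
Proof.
move=> rt; have [t' t'2 rt'] := ls_returns_exists.
rewrite (ls_returns_unique rt rt'); split => //.
have t'_gt0 := pow2_gt0 t'2; have [k [_ [At' [Wt' _]]]] := rt'.
move: At' Wt'; rewrite armijoE // wolfeE ?pow2_neq // le_eqVlt => /orP[/eqP t'u2|-> ->//].
by case: u2_npow2; rewrite -t'u2.
Qed.

End BracketingLineSearch.

Lemma cvg_mx_entrywise {R : realType} (m n : nat)
    (M : nat -> 'M[R]_(m, n)) (L : 'M[R]_(m, n)) :
  (forall i j, (fun k => M k i j) @ \oo --> L i j) -> M @ \oo --> L.
Proof.
move=> ML; apply/cvg_ballP => e e_gt0.
have : \forall k \near \oo, forall i j, ball (L i j) e (M k i j).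
  apply: filter_forall => i; apply: filter_forall => j.
  exact: (cvg_ball (ML i j)).
by apply: filterS => k MLk; split.
Qed.

Section HalvingSteps.
Context {R : realType} (T : R ^nat).
Hypotheses (T_gt0 : forall k, 0 < T k) (T_half : forall k, T k.+1 <= T k / 2).

Lemma halving_le_geometric k : T k <= geometric (T 0%N) 2^-1 k.
Proof.
elim: k => [|k IH] /=; first by rewrite expr0 mulr1.
by rewrite (le_trans (T_half k)) // exprSr mulrA ler_pM2r.
Qed.

Lemma cvgn_series_halving : cvgn (series T).
Proof.
apply: (series_le_cvg _ _ halving_le_geometric).
- by move=> k; exact: ltW.
- by move=> k; rewrite /= mulr_ge0 ?exprn_ge0 // ltW.
by apply: is_cvg_geometric_series; rewrite gtr0_norm ?invf_lt1 ?ltr1n.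
Qed.

Lemma cvg_halving_steps (n : nat) (b : R) (xs : nat -> 'rV[R]_n.+1) :
  (forall k, `|xs k 0 ord0| <= b * T k) ->
  (forall k i, xs k.+1 0 (lift ord0 i) = xs k 0 (lift ord0 i) - T k) ->
  exists2 xbar : 'rV[R]_n.+1, xs @ \oo --> xbar & xbar 0 ord0 = 0.
Proof.
move=> xs0_le xsS.
have T0 : T @ \oo --> 0 := cvg_series_cvg_0 cvgn_series_halving.
have bT0 : (fun k => b * T k) @ \oo --> 0.
  by rewrite -(mulr0 b); exact: cvgM (cvg_cst b) T0.
have xsE k i : xs k 0 (lift ord0 i) = xs 0%N 0 (lift ord0 i) - series T k.
  elim: k => [|k IH]; first by rewrite /series /= big_geq ?subr0.
  by rewrite xsS IH seriesSr opprD addrA.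
exists (\row_i if i == ord0 then 0 else xs 0%N 0 i - limn (series T)); last first.
  by rewrite mxE eqxx.
apply: cvg_mx_entrywise => i j; rewrite ord1 mxE.
case: (unliftP ord0 j) => [j' ->|->]; last first.
  rewrite eqxx; apply: (@squeeze_cvgr _ _ _ _ (fun k => - (b * T k)) _ _ _ _ _ bT0).
    by apply: nearW => k; rewrite -ler_norml.
  by rewrite -oppr0; exact: cvgN.
rewrite eq_sym (negbTE (neq_lift _ _)).
under eq_fun do rewrite xsE.
exact: cvgB (cvg_cst _) cvgn_series_halving.
Qed.

End HalvingSteps.

Section LebesgueNull.
Context {R : realType}.

Lemma lebesgue_nullS n (A B : set 'rV[R]_n) :
  lebesgue_null B -> A `<=` B -> lebesgue_null A.
Proof.
move=> nullB AB eps eps_gt0; have [lo [hi [lo_hi [B_sub vol]]]] := nullB eps eps_gt0.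
by exists lo, hi; split; last split; [|exact: subset_trans B_sub|].
Qed.

Lemma sum_halves_le (eps : R) N : 0 <= eps -> \sum_(k < N) eps / 2 ^+ k.+1 <= eps.
Proof.
have -> : \sum_(k < N) eps / 2 ^+ k.+1 = eps - eps / 2 ^+ N.
  elim: N => [|N IH]; first by rewrite big_ord0 expr0 divr1 subrr.
  by rewrite big_ord_recr /= IH exprS; field; rewrite expf_neq0.
by move=> eps_ge0; rewrite gerBl divr_ge0 ?exprn_ge0.
Qed.

Lemma lebesgue_null_coord0_countable n (c : nat -> R) :
  lebesgue_null [set y : 'rV[R]_n.+1 | exists j, y 0 ord0 = c j].
Proof.
(* Box k, for (j, m) decoded from k, covers the part of the j-th hyperplane
   where the other coordinates are bounded by m + 1; its volume is eps / 2^(k+1). *)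
move=> eps eps_gt0.
pose dec k := odflt (0%N, 0%N) (unpickle k) : nat * nat.
pose r k : R := (dec k).2.+1%:R.
pose w k := eps / (2 ^+ k.+2 * (2 * r k) ^+ n).
have r_gt0 k : 0 < r k by rewrite ltr0n.
have w_ge0 k : 0 <= w k.
  by rewrite divr_ge0 ?ltW // mulr_gt0 ?exprn_gt0 ?mulr_gt0.
pose lo k : 'rV[R]_n.+1 := \row_i if i == ord0 then c (dec k).1 - w k else - r k.
pose hi k : 'rV[R]_n.+1 := \row_i if i == ord0 then c (dec k).1 + w k else r k.
exists lo, hi; split; [|split].
- by move=> k i; rewrite !mxE; have := w_ge0 k; have := r_gt0 k; case: ifP; lra.
- move=> y [j yj]; set M := \sum_i `|y 0 i|.
  have y_le i : `|y 0 i| <= M by rewrite /M (bigD1 i) //= lerDl sumr_ge0.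
  have M_lt := archi_boundP (sumr_ge0 _ (fun i _ => normr_ge0 (y 0 i)) : 0 <= M).
  set m := Num.Def.archi_bound M in M_lt.
  have dec_jm : dec (pickle (j, m)) = (j, m) by rewrite /dec pickleK.
  exists (pickle (j, m)) => //= i; rewrite !mxE /r dec_jm /=.
  case: ifP => [/eqP ->|_]; first by rewrite yj; have := w_ge0 (pickle (j, m)); lra.
  by have := y_le i; rewrite ler_norml -natr1 => /andP[? ?]; apply/andP; split; lra.
- move=> N; apply: le_trans (sum_halves_le N (ltW eps_gt0)); apply: ler_sum => k _.
  suff -> : \prod_i (hi k 0 i - lo k 0 i) = eps / 2 ^+ k.+1 by [].
  rewrite big_ord_recl !mxE eqxx.
  under eq_bigr => i _ do
    rewrite !mxE eq_sym (negbTE (neq_lift _ _)) opprK -mulr2n -mulr_natl.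
  rewrite prodr_const card_ord /w !exprS; field.
  by rewrite !expf_neq0 ?mulf_neq0 ?pnatr_eq0.
Qed.

End LebesgueNull.

Lemma lebesgue_null_dyadic_coord0 {R : realType} n (a : R) : a != 0 ->
  lebesgue_null [set y : 'rV[R]_n.+1 | dyadic (`|y 0 ord0| / a)].
Proof.
move=> a0; pose c j := if unpickle j is Some (z, q) then a * (z%:~R / 2 ^+ q) else 0.
apply: lebesgue_nullS (lebesgue_null_coord0_countable n c) _ => y [z [q yE]].
have [y0_ge0|y0_lt0] := lerP 0 (y 0 ord0).
  by exists (pickle (z, q)); rewrite /c pickleK -yE ger0_norm // mulrC divfK.
exists (pickle (- z, q)); rewrite /c pickleK rmorphN mulNr -yE ltr0_norm //.
by rewrite mulrN mulrC divfK // opprK.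
Qed.

Section GradientDescent.
Context {R : realType} (n : nat) (a c1 c2 : R).
Hypotheses (a_gt0 : 0 < a) (n_le_a2 : n%:R <= a ^+ 2).
Hypotheses (c2_gt0 : 0 < c2) (c2_lt1 : c2 < 1).
Hypothesis tau0 : c1 * (a ^+ 2 + n%:R) = n%:R.
Implicit Types y : 'rV[R]_n.+1.

Local Notation u y := (`|y 0 ord0| / a).
Local Notation next y t := (y + t *: - grad (fobj a) y).
Local Notation returns y := (ls_returns (fobj a) c1 c2 y (- grad (fobj a) y)).

Lemma nondyadic_coord0_neq0 y : ~ dyadic (u y) -> y 0 ord0 != 0.
Proof. by apply: contra_notN => /eqP ->; rewrite normr0 mul0r; exact: dyadic0. Qed.

Lemma fobj_ls_returns y : ~ dyadic (u y) ->
  (exists t, returns y t) /\ forall t, returns y t -> pow2 t /\ u y < t < 2 * u y.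
Proof.
move=> y_nd; have y0 := nondyadic_coord0_neq0 y_nd.
have u_gt0 : 0 < u y by rewrite divr_gt0 ?normr_gt0.
have armijoE t : 0 < t -> armijo (fobj a) c1 y (- grad (fobj a) y) t <-> t <= 2 * u y.
  by move=> /ltW; exact: armijo_steepestE.
have wolfeE t : 0 < t -> t != u y ->
    wolfe (fobj a) c2 y (- grad (fobj a) y) t <-> u y < t.
  by move=> /ltW; exact: wolfe_steepestE.
have u_npow2 : ~ pow2 (u y) by move/pow2_dyadic.
have u2_npow2 : ~ pow2 (2 * u y).
  by move/pow2_dyadic/dyadic_half; rewrite mulrC mulKf ?pnatr_eq0.
split; last exact: ls_returns_pow2 armijoE wolfeE u_npow2 u2_npow2.
by have [t _ rt] := ls_returns_exists u_gt0 armijoE wolfeE u_npow2; exists t.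
Qed.

Lemma norm_coord0_next y t : y 0 ord0 != 0 -> u y < t -> u (next y t) = t - u y.
Proof.
move=> y0; rewrite ltr_pdivrMr // => y_lt.
rewrite steepest_step0 // normrM normr_sg y0 mul1r ltr0_norm ?subr_lt0 //.
by rewrite opprB mulrBl mulfK ?gt_eqF.
Qed.

Lemma nondyadic_next y t : ~ dyadic (u y) -> pow2 t -> u y < t ->
  ~ dyadic (u (next y t)).
Proof.
move=> y_nd t2 ut; rewrite norm_coord0_next ?nondyadic_coord0_neq0 //.
move=> tu_d; apply: y_nd.
have -> : u y = t - (t - u y) by rewrite opprB addrC subrK.
exact: dyadicB (pow2_dyadic t2) tu_d.
Qed.

Lemma gd_iterates_exists (x0 : 'rV[R]_n.+1) : ~ dyadic (u x0) ->
  exists xs, gd_iterates (fobj a) c1 c2 x0 xs.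
Proof.
move=> x0_nd; pose step y := get [set t | returns y t].
have step_returns y : ~ dyadic (u y) -> returns y (step y).
  by move=> /fobj_ls_returns[ex _]; exact: (getPex ex).
pose xs k := iter k (fun y => next y (step y)) x0.
have xs_nd k : ~ dyadic (u (xs k)).
  elim: k => [//|k xk_nd]; have xk_step := step_returns _ xk_nd.
  have [_ /(_ _ xk_step)[t2 /andP[ut _]]] := fobj_ls_returns xk_nd.
  exact: (nondyadic_next xk_nd t2 ut).
exists xs; split=> //; split=> k.
  exact/differentiable_fobj/nondyadic_coord0_neq0/xs_nd.
by exists (step (xs k)); split; [exact: step_returns|].
Qed.

Lemma gd_iterates_cvg (x0 : 'rV[R]_n.+1) xs :
  ~ dyadic (u x0) -> gd_iterates (fobj a) c1 c2 x0 xs ->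
  exists2 xbar : 'rV[R]_n.+1, xs @ \oo --> xbar & xbar 0 ord0 = 0.
Proof.
move=> x0_nd [xs0 [_ /choice[T xsS]]].
have xs_nd k : ~ dyadic (u (xs k)).
  elim: k => [|k xk_nd]; first by rewrite xs0.
  have [rT ->] := xsS k; have [_ /(_ _ rT)[T2 /andP[uT _]]] := fobj_ls_returns xk_nd.
  exact: nondyadic_next.
have T_spec k := (fobj_ls_returns (xs_nd k)).2 _ (xsS k).1.
apply: (@cvg_halving_steps _ T _ _ _ a).
- by move=> k; have [/pow2_gt0] := T_spec k.
- move=> k; have [Tk2 /andP[uTk Tku]] := T_spec k.
  have [TSk2 /andP[_]] := T_spec k.+1.
  rewrite (xsS k).2 norm_coord0_next ?nondyadic_coord0_neq0 // => TSku.
  by apply: pow2_le_half => //; lra.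
- move=> k; have [_ /andP[uTk _]] := T_spec k.
  by rewrite mulrC -ler_pdivrMr // ltW.
- move=> k i; rewrite (xsS k).2 steepest_stepS //.
  exact: nondyadic_coord0_neq0.
Qed.

End GradientDescent.

Theorem corollary2 (R : realType) (n : nat) (a c1 c2 : R) :
  (2 <= n)%N ->
  Num.sqrt (n%:R - 1) <= a ->
  0 < c1 -> c1 < c2 -> c2 < 1 ->
  c1 + (n%:R - 1) * (c1 - 1) / a ^+ 2 = 0 ->
  almost_surely (fun x0 : 'rV[R]_n =>
    (exists xs : nat -> 'rV[R]_n, gd_iterates (fobj a) c1 c2 x0 xs) /\
    forall xs : nat -> 'rV[R]_n, gd_iterates (fobj a) c1 c2 x0 xs ->
      exists xbar : 'rV[R]_n,
        xs @ \oo --> xbar /\ (forall i : 'I_n, val i = 0%N -> xbar 0 i = 0)).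
Proof.
move=> n_ge2 sqrt_le c1_gt0 c1_lt_c2 c2_lt1 tau0.
case: n n_ge2 sqrt_le tau0 => [|[|n]] // _; rewrite -natr1 addrK => sqrt_le tau0.
have a_gt0 : 0 < a by apply: lt_le_trans sqrt_le; rewrite sqrtr_gt0 ltr0n.
have n_le_a2 : n.+1%:R <= a ^+ 2.
  by rewrite -(sqr_sqrtr (ler0n _ n.+1)) ler_pXn2r ?nnegrE ?sqrtr_ge0 ?(ltW a_gt0).
have {}tau0 : c1 * (a ^+ 2 + n.+1%:R) = n.+1%:R.
  move/(congr1 ( *%R^~ (a ^+ 2))): tau0.
  rewrite mul0r mulrDl mulfVK ?expf_neq0 ?gt_eqF //.
  by move=> h; rewrite mulrDr; lra.
have c2_gt0 : 0 < c2 by apply: lt_trans c1_lt_c2.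
apply: lebesgue_nullS (lebesgue_null_dyadic_coord0 n.+1 (lt0r_neq0 a_gt0)) _.
move=> x0 /= x0_bad.
apply: contrapT => x0_nd; apply: x0_bad; split; first exact: gd_iterates_exists.
move=> xs /(gd_iterates_cvg a_gt0 n_le_a2 c2_gt0 c2_lt1 tau0 x0_nd)[xbar xs_cvg xbar0].
by exists xbar; split=> // i i0; rewrite (_ : i = ord0) //; exact: val_inj.
Qed.
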